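(* Let $(\mathcal{M},\mathfrak{X})$ be a model of $\mathsf{GB}^{+\infty}$ or of $\mathsf{GB}^{-\infty}$. Then for every standard $\mathcal{L}_{\mathsf{ZF}}$-formula $\varphi(x_1,\dots,x_n)$ and all elements $a_1,\dots,a_n$ of $\mathcal{M}$: $$\mathcal{M}\models\varphi(a_1,\dots,a_n)\iff(\mathcal{M},\mathfrak{X})\models\ulcorner\varphi(c_{a_1},\dots,c_{a_n})\urcorner\in\mathsf{T}_{\mathsf{Most}}.$$
   Context: Models of the two-sorted theories are written $(\mathcal{M},\mathfrak{X})$ with $\mathcal{M}$ the set sort and $\mathfrak{X}$ a collection of subsets of $M$ (the classes). $\mathsf{GB}^{+\infty}=\mathsf{GB}$ (Gödel–Bernays); $\mathsf{GB}^{-\infty}=\mathsf{GB}_{\mathsf{fin}}+\mathsf{TC}$, where $\mathsf{GB}_{\mathsf{fin}}$ replaces infinity by its negation and $\mathsf{TC}$ says transitive closures exist. Inside such a model: $c_a$ is a constant naming the set $a$; $\mathcal{L}^+_{\mathsf{ZF}}$-sentences are codes of $\varphi(c_{a_1},\dots,c_{a_n})$ with $\varphi$ an internal $\mathcal{L}_{\mathsf{ZF}}$-formula; $\mathsf{depth}(\varphi)$ is the length of the longest path in the parsing tree; $\mathsf{Depth}_k$ = formulas of depth $\le k$. A class $T$ is a $\mathsf{Depth}_k$-truth class over $(V,\in)$ if $T$ consists of sentences obtained by substituting constants $c_a$ into formulas of $\mathsf{Depth}_k$, and for such sentences: $\ulcorner c_a=c_b\urcorner\in T\leftrightarrow a=b$,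 $\ulcorner c_a\in c_b\urcorner\in T\leftrightarrow a\in b$, $\neg\psi\in T\leftrightarrow\psi\notin T$, $(\psi_1\vee\psi_2)\in T\leftrightarrow(\psi_1\in T\vee\psi_2\in T)$, $\exists v\,\psi(v)\in T\leftrightarrow\exists x\,\psi(c_x)\in T$. $\mathsf{T}_{\mathsf{Most}}(x)$ expresses: $x$ is an $\mathcal{L}^+_{\mathsf{ZF}}$-sentence $\varphi(c_{a_1},\dots,c_{a_n})$ and there exist $p\ge\mathsf{depth}(\varphi)$ and a class $T$ with $\varphi(c_{a_1},\dots,c_{a_n})\in T$ and $T$ a $\mathsf{Depth}_p$-truth class over $(V,\in)$. *)

(* A two-sorted model (M, X) is given by a carrier type M, a membership
   relation E : M -> M -> Prop (E z a  reads  "z ∈ a"), and a collection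
   X : (M -> Prop) -> Prop of classes (subsets of M). *)
From Stdlib Require Import List Arith.
Set Implicit Arguments.

Definition is_empty {M : Type} (E : M -> M -> Prop) (x : M) : Prop :=
  forall z, ~ E z x.
Definition is_upair {M : Type} (E : M -> M -> Prop) (a b c : M) : Prop :=
  forall z, E z c <-> (z = a \/ z = b).
Definition is_pair {M : Type} (E : M -> M -> Prop) (a b p : M) : Prop :=
  exists u v, is_upair E a a u /\ is_upair E a b v /\ is_upair E u v p.
Definition is_succ_of {M : Type} (E : M -> M -> Prop) (y x : M) : Prop :=
  forall z, E z x <-> (E z y \/ z = y).
Fixpoint is_num {M : Type} (E : M -> M -> Prop) (n : nat) (x : M) : Prop :=
  match n with
  | O => is_empty E x
  | S k => exists y, is_num E k y /\ is_succ_of E y x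
  end.
Definition transitive_set {M : Type} (E : M -> M -> Prop) (x : M) : Prop :=
  forall y z, E z y -> E y x -> E z x.
(* x is an internal natural number (finite von Neumann ordinal of M) *)
Definition is_nat {M : Type} (E : M -> M -> Prop) (x : M) : Prop :=
  transitive_set E x /\ (forall y, E y x -> transitive_set E y) /\
  (is_empty E x \/ exists y, is_succ_of E y x) /\
  (forall y, E y x -> is_empty E y \/ exists z, is_succ_of E z y).

(* Internal coding of L^+_ZF syntax (fixed convention):                *)
(*   variable v_i  ~ <0, i>   (i an internal natural number)           *)
(*   constant c_a  ~ <1, a>                                            *)
(*   t = u ~ <0,<t,u>>,  t ∈ u ~ <1,<t,u>>,  ¬y ~ <2,y>,               *)
(*   y ∨ z ~ <3,<y,z>>,  ∃v y ~ <4,<v,y>>                               *)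
Definition tagged {M : Type} (E : M -> M -> Prop) (k : nat) (u p : M) : Prop :=
  exists z, is_num E k z /\ is_pair E z u p.
Definition var_code {M : Type} (E : M -> M -> Prop) (t : M) : Prop :=
  exists i, is_nat E i /\ tagged E 0 i t.
Definition const_code {M : Type} (E : M -> M -> Prop) (a t : M) : Prop :=
  tagged E 1 a t.
Definition term_code {M : Type} (E : M -> M -> Prop) (t : M) : Prop :=
  var_code E t \/ exists a, const_code E a t.
Definition eq_code {M : Type} (E : M -> M -> Prop) (t u x : M) : Prop :=
  exists q, is_pair E t u q /\ tagged E 0 q x.
Definition mem_code {M : Type} (E : M -> M -> Prop) (t u x : M) : Prop :=
  exists q, is_pair E t u q /\ tagged E 1 q x.
Definition neg_code {M : Type} (E : M -> M -> Prop) (y x : M) : Prop :=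
  tagged E 2 y x.
Definition or_code {M : Type} (E : M -> M -> Prop) (y z x : M) : Prop :=
  exists q, is_pair E y z q /\ tagged E 3 q x.
Definition ex_code {M : Type} (E : M -> M -> Prop) (v y x : M) : Prop :=
  exists q, is_pair E v y q /\ tagged E 4 q x.
Definition atom_code {M : Type} (E : M -> M -> Prop) (x : M) : Prop :=
  exists t u, term_code E t /\ term_code E u /\ (eq_code E t u x \/ mem_code E t u x).

Definition pair_in {M : Type} (E : M -> M -> Prop) (h x d : M) : Prop :=
  exists w, E w h /\ is_pair E x d w.

(* h is a set of pairs <x, d> witnessing that x is an L^+_ZF formula whose
   parsing tree has depth <= d (atomic formulas have depth 0; a compound
   formula has depth 1 + the max depth of its immediate subformulas). *)
Definition depth_witness {M : Type} (E : M -> M -> Prop) (h : M) : Prop :=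
  forall w, E w h -> exists x d, is_pair E x d w /\ is_nat E d /\
    ( atom_code E x
    \/ (exists y d', neg_code E y x /\ E d' d /\ pair_in E h y d')
    \/ (exists y z d1 d2, or_code E y z x /\ E d1 d /\ E d2 d /\
                          pair_in E h y d1 /\ pair_in E h z d2)
    \/ (exists v y d', var_code E v /\ ex_code E v y x /\ E d' d /\ pair_in E h y d')).

Definition form_depth_le {M : Type} (E : M -> M -> Prop) (x p : M) : Prop :=
  is_nat E p /\ exists h d, depth_witness E h /\ pair_in E h x d /\ (E d p \/ d = p).

Definition is_formula {M : Type} (E : M -> M -> Prop) (x : M) : Prop :=
  exists p, form_depth_le E x p.

(* h witnesses that variable (code) v occurs free in each of its elements *)
Definition free_witness {M : Type} (E : M -> M -> Prop) (v h : M) : Prop :=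
  forall x, E x h ->
    (exists t u, (eq_code E t u x \/ mem_code E t u x) /\ (t = v \/ u = v))
    \/ (exists y, neg_code E y x /\ E y h)
    \/ (exists y z, or_code E y z x /\ (E y h \/ E z h))
    \/ (exists w y, ex_code E w y x /\ w <> v /\ E y h).
Definition free_in {M : Type} (E : M -> M -> Prop) (v x : M) : Prop :=
  exists h, free_witness E v h /\ E x h.

Definition is_sentence {M : Type} (E : M -> M -> Prop) (x : M) : Prop :=
  is_formula E x /\ ~ (exists v, var_code E v /\ free_in E v x).

(* internal substitution of the term c for the free occurrences of the
   variable v:  x' = x(c/v).  h is a set of pairs <y, y(c/v)>. *)
Definition subst_term {M : Type} (v c t t' : M) : Prop :=
  (t = v /\ t' = c) \/ (t <> v /\ t' = t).
Definition subst_witness {M : Type} (E : M -> M -> Prop) (v c h : M) : Prop :=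
  forall w, E w h -> exists x x', is_pair E x x' w /\
    ( (exists t u t' u', subst_term v c t t' /\ subst_term v c u u' /\
          ((eq_code E t u x /\ eq_code E t' u' x') \/
           (mem_code E t u x /\ mem_code E t' u' x')))
    \/ (exists y y', neg_code E y x /\ neg_code E y' x' /\ pair_in E h y y')
    \/ (exists y z y' z', or_code E y z x /\ or_code E y' z' x' /\
                          pair_in E h y y' /\ pair_in E h z z')
    \/ (exists y, ex_code E v y x /\ x' = x)
    \/ (exists u y y', ex_code E u y x /\ u <> v /\ ex_code E u y' x' /\
                       pair_in E h y y')).
Definition subst {M : Type} (E : M -> M -> Prop) (v c x x' : M) : Prop :=
  exists h, subst_witness E v c h /\ pair_in E h x x'.

Definition depth_truth_class {M : Type} (E : M -> M -> Prop) (T : M -> Prop) (p : M)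
  : Prop :=
  (forall x, T x -> is_sentence E x /\ form_depth_le E x p) /\
  (forall x, is_sentence E x -> form_depth_le E x p ->
     (forall a b ca cb, const_code E a ca -> const_code E b cb ->
        (eq_code E ca cb x -> (T x <-> a = b)) /\
        (mem_code E ca cb x -> (T x <-> E a b))) /\
     (forall y, neg_code E y x -> (T x <-> ~ T y)) /\
     (forall y z, or_code E y z x -> (T x <-> (T y \/ T z))) /\
     (forall v y, ex_code E v y x ->
        (T x <-> exists a ca y', const_code E a ca /\ subst E v ca y y' /\ T y'))).

Definition T_Most {M : Type} (E : M -> M -> Prop) (X : (M -> Prop) -> Prop) (x : M)
  : Prop :=
  is_sentence E x /\
  exists p, is_nat E p /\ form_depth_le E x p /\
    exists T, X T /\ T x /\ depth_truth_class E T p.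

Inductive fm : Type :=
| fEq : nat -> nat -> fm
| fIn : nat -> nat -> fm
| fNot : fm -> fm
| fOr : fm -> fm -> fm
| fEx : nat -> fm -> fm.

Definition upd {A : Type} (s : nat -> A) (i : nat) (a : A) : nat -> A :=
  fun j => if Nat.eqb j i then a else s j.

Fixpoint sat {M : Type} (E : M -> M -> Prop) (s : nat -> M) (f : fm) : Prop :=
  match f with
  | fEq i j => s i = s j
  | fIn i j => E (s i) (s j)
  | fNot g => ~ sat E s g
  | fOr g h => sat E s g \/ sat E s h
  | fEx i g => exists a, sat E (upd s i a) g
  end.

Inductive ctm (M : Type) : Type :=
| cVar : nat -> ctm M
| cCon : M -> ctm M.
Inductive cfm (M : Type) : Type :=
| cEq : ctm M -> ctm M -> cfm M
| cIn : ctm M -> ctm M -> cfm M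
| cNot : cfm M -> cfm M
| cOr : cfm M -> cfm M -> cfm M
| cEx : nat -> cfm M -> cfm M.
Arguments cVar {M}.
Arguments cCon {M}.

Definition inst_tm {M : Type} (s : nat -> M) (bound : list nat) (i : nat) : ctm M :=
  if existsb (Nat.eqb i) bound then cVar i else cCon (s i).
Fixpoint inst {M : Type} (s : nat -> M) (bound : list nat) (f : fm) : cfm M :=
  match f with
  | fEq i j => cEq (inst_tm s bound i) (inst_tm s bound j)
  | fIn i j => cIn (inst_tm s bound i) (inst_tm s bound j)
  | fNot g => cNot (inst s bound g)
  | fOr g h => cOr (inst s bound g) (inst s bound h)
  | fEx i g => cEx i (inst s (i :: bound) g)
  end.

Definition code_ctm {M : Type} (E : M -> M -> Prop) (t : ctm M) (c : M) : Prop :=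
  match t with
  | cVar i => exists n, is_num E i n /\ tagged E 0 n c
  | cCon a => const_code E a c
  end.
Fixpoint code_cfm {M : Type} (E : M -> M -> Prop) (f : cfm M) (x : M) : Prop :=
  match f with
  | cEq t u => exists ct cu, code_ctm E t ct /\ code_ctm E u cu /\ eq_code E ct cu x
  | cIn t u => exists ct cu, code_ctm E t ct /\ code_ctm E u cu /\ mem_code E ct cu x
  | cNot g => exists y, code_cfm E g y /\ neg_code E y x
  | cOr g h => exists y z, code_cfm E g y /\ code_cfm E h z /\ or_code E y z x
  | cEx i g => exists v y, code_ctm E (cVar i) v /\ code_cfm E g y /\ ex_code E v y x
  end.

(* Two-sorted formulas without class quantifiers (for predicative      *)
(* class comprehension).                                               *)
Inductive fm2 : Type :=
| gEq : nat -> nat -> fm2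
| gIn : nat -> nat -> fm2
| gInC : nat -> nat -> fm2
| gNot : fm2 -> fm2
| gOr : fm2 -> fm2 -> fm2
| gEx : nat -> fm2 -> fm2.

Fixpoint sat2 {M : Type} (E : M -> M -> Prop) (s : nat -> M) (c : nat -> M -> Prop)
  (f : fm2) : Prop :=
  match f with
  | gEq i j => s i = s j
  | gIn i j => E (s i) (s j)
  | gInC i k => c k (s i)
  | gNot g => ~ sat2 E s c g
  | gOr g h => sat2 E s c g \/ sat2 E s c h
  | gEx i g => exists a, sat2 E (upd s i a) c g
  end.

(* Class extensionality is automatic (classes are subsets of M).       *)
Definition GB_common {M : Type} (E : M -> M -> Prop) (X : (M -> Prop) -> Prop) : Prop :=
  (forall a b, (forall z, E z a <-> E z b) -> a = b) /\
  (forall a, X (fun z => E z a)) /\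
  (forall a b, exists c, is_upair E a b c) /\
  (forall a, exists u, forall z, E z u <-> exists y, E y a /\ E z y) /\
  (forall a, exists p, forall z, E z p <-> (forall w, E w z -> E w a)) /\
  (forall a, (exists z, E z a) -> exists z, E z a /\ forall w, E w z -> ~ E w a) /\
  (forall F, X F ->
     (forall x y y' p p', F p -> is_pair E x y p -> F p' -> is_pair E x y' p' -> y = y') ->
     forall a, exists b, forall y, E y b <-> exists x p, E x a /\ F p /\ is_pair E x y p) /\
  (forall (f : fm2) (s : nat -> M) (c : nat -> M -> Prop),
     (forall k, X (c k)) -> X (fun y => sat2 E (upd s 0 y) c f)).

Definition Infinity {M : Type} (E : M -> M -> Prop) : Prop :=
  exists w, (exists e, E e w /\ is_empty E e) /\
            (forall y, E y w -> exists z, E z w /\ is_succ_of E y z).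

Definition TC_axiom {M : Type} (E : M -> M -> Prop) : Prop :=
  forall a, exists t, (forall z, E z a -> E z t) /\ transitive_set E t /\
    (forall t', (forall z, E z a -> E z t') -> transitive_set E t' ->
       forall z, E z t -> E z t').

Definition GB_plus {M : Type} (E : M -> M -> Prop) (X : (M -> Prop) -> Prop) : Prop :=
  GB_common E X /\ Infinity E.
Definition GB_minus {M : Type} (E : M -> M -> Prop) (X : (M -> Prop) -> Prop) : Prop :=
  GB_common E X /\ ~ Infinity E /\ TC_axiom E.

(* A Depth_p-truth class agrees with Tarski satisfaction on the codes of standard formulas
   of depth at most p, by induction on the standard formula: internal substitution of a
   constant for a variable commutes with coding and yields a formula of the same shape, hence
   of the same depth.  This gives the direction from T_Most to truth.

   For the converse, let Cl_p(A) be the class of sentences of depth at most p whose Tarski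
   clause holds when A is used as the truth predicate of their immediate subformulas and
   substitution instances.  Cl_p is given by a formula with no class quantifiers, so
   predicative comprehension makes every iterate Cl_p^(k+1)(A_0) a class.  By induction on k,
   Cl_p^(k+1)(A_0) and Cl_p^(k+2)(A_0) agree on sentences of depth at most k, so for the
   standard p = depth(phi), Cl_p^(p+1)(A_0) is a fixed point of Cl_p on Depth_p, i.e. a
   Depth_p-truth class, and it contains the code of phi when phi is true. *)

From Stdlib Require Import List Arith Lia Classical.
Import ListNotations.

Section Model.
Context {M : Type} (E : M -> M -> Prop).
Hypothesis extensionality : forall a b, (forall z, E z a <-> E z b) -> a = b.
Hypothesis pairing : forall a b, exists c, is_upair E a b c.
Hypothesis union : forall a, exists u, forall z, E z u <-> exists y, E y a /\ E z y.
Hypothesis foundation :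
  forall a, (exists z, E z a) -> exists z, E z a /\ forall w, E w z -> ~ E w a.
Variable empty : M.
Hypothesis empty_is_empty : is_empty E empty.
Set Implicit Arguments.
Unset Strict Implicit.

(** * Pairs, numerals and codes *)

Lemma upair_unique a b c c' : is_upair E a b c -> is_upair E a b c' -> c = c'.
Proof. intros H H'. apply extensionality. intro z. rewrite (H z), (H' z). tauto. Qed.

Lemma upair_inv a b a' b' c : is_upair E a b c -> is_upair E a' b' c ->
  (a = a' /\ b = b') \/ (a = b' /\ b = a').
Proof.
  intros H H'.
  assert (a = a' \/ a = b') by (apply H', H; auto).
  assert (b = a' \/ b = b') by (apply H', H; auto).
  assert (a' = a \/ a' = b) by (apply H, H'; auto).
  assert (b' = a \/ b' = b) by (apply H, H'; auto).
  intuition congruence.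
Qed.

Lemma pair_inj a b a' b' p : is_pair E a b p -> is_pair E a' b' p -> a = a' /\ b = b'.
Proof.
  intros [u [v [Hu [Hv Hp]]]] [u' [v' [Hu' [Hv' Hp']]]].
  destruct (upair_inv Hp Hp') as [[-> ->] | [-> ->]];
    [ destruct (upair_inv Hu Hu'), (upair_inv Hv Hv')
    | destruct (upair_inv Hu Hv'), (upair_inv Hv Hu') ]; intuition congruence.
Qed.

Lemma pair_unique a b p p' : is_pair E a b p -> is_pair E a b p' -> p = p'.
Proof.
  intros [u [v [Hu [Hv Hp]]]] [u' [v' [Hu' [Hv' Hp']]]].
  rewrite (upair_unique Hu' Hu), (upair_unique Hv' Hv) in Hp'.
  exact (upair_unique Hp Hp').
Qed.

Lemma pair_exists a b : exists p, is_pair E a b p.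
Proof.
  destruct (pairing a a) as [u Hu], (pairing a b) as [v Hv], (pairing u v) as [p Hp].
  exists p, u, v. auto.
Qed.

Lemma mem_irrefl a : ~ E a a.
Proof.
  intro Haa. destruct (pairing a a) as [c Hc].
  destruct (foundation c) as [z [Hz Hmin]]; [exists a; apply Hc; auto|].
  assert (z = a) as -> by (apply Hc in Hz; tauto).
  apply (Hmin a Haa), Hc. auto.
Qed.

Lemma union2_exists a b : exists u, forall z, E z u <-> E z a \/ E z b.
Proof.
  destruct (pairing a b) as [c Hc], (union c) as [u Hu].
  exists u. intro z. rewrite (Hu z). split.
  - intros [y [Hy Hzy]]. apply Hc in Hy as [-> | ->]; auto.
  - intros [Hz | Hz]; [exists a | exists b]; split; auto; apply Hc; auto.
Qed.

Lemma adjoin_exists a w : exists u, forall z, E z u <-> E z a \/ z = w.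
Proof.
  destruct (pairing w w) as [s Hs], (union2_exists a s) as [u Hu].
  exists u. intro z. rewrite (Hu z), (Hs z). tauto.
Qed.

Lemma num_unique k n n' : is_num E k n -> is_num E k n' -> n = n'.
Proof.
  revert n n'. induction k as [|k IH]; intros n n' Hn Hn'.
  - apply extensionality. intro z. split; intro Hz; [destruct (Hn z Hz) | destruct (Hn' z Hz)].
  - destruct Hn as [m [Hm Hs]], Hn' as [m' [Hm' Hs']].
    rewrite (IH _ _ Hm' Hm) in Hs'.
    apply extensionality. intro z. rewrite (Hs z), (Hs' z). tauto.
Qed.

Lemma num_exists k : exists n, is_num E k n.
Proof.
  induction k as [|k [m Hm]]; [exists empty; exact empty_is_empty|].
  destruct (adjoin_exists m m) as [n Hn]. exists n, m. auto.
Qed.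

Lemma num_succ_mem k m n z : is_num E k m -> is_num E (S k) n -> (E z n <-> E z m \/ z = m).
Proof. intros Hm [m' [Hm' Hs]]. rewrite (num_unique Hm' Hm) in Hs. apply Hs. Qed.

Lemma num_mem k n z : is_num E k n -> E z n -> exists j, j < k /\ is_num E j z.
Proof.
  revert n. induction k as [|k IH]; intros n Hn Hz; [destruct (Hn z Hz)|].
  destruct Hn as [m [Hm Hs]]. apply Hs in Hz as [Hz | ->].
  - destruct (IH m Hm Hz) as [j [Hj Hjz]]. exists j. split; [lia | exact Hjz].
  - exists k. auto.
Qed.

Lemma num_lt_mem j k m n : j < k -> is_num E j m -> is_num E k n -> E m n.
Proof.
  revert n. induction k as [|k IH]; intros n Hjk Hm Hn; [lia|].
  destruct Hn as [n' [Hn' Hs]]. apply Hs.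
  destruct (Nat.eq_dec j k) as [-> | Hne].
  - right. exact (num_unique Hm Hn').
  - left. apply (IH n'); auto. lia.
Qed.

Lemma num_inj j k n : is_num E j n -> is_num E k n -> j = k.
Proof.
  intros Hj Hk. destruct (lt_eq_lt_dec j k) as [[Hlt | Heq] | Hlt]; auto;
    exfalso; eapply mem_irrefl, num_lt_mem; eauto.
Qed.

Lemma num_transitive k n : is_num E k n -> transitive_set E n.
Proof.
  intros Hn y z Hzy Hyn.
  destruct (num_mem Hn Hyn) as [j [Hj Hy]], (num_mem Hy Hzy) as [i [Hi Hz]].
  refine (num_lt_mem _ Hz Hn). lia.
Qed.

Lemma num_zero_or_succ k n : is_num E k n -> is_empty E n \/ exists m, is_succ_of E m n.
Proof. destruct k; [left; auto | intros [m [_ Hs]]; eauto]. Qed.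

Lemma num_is_nat k n : is_num E k n -> is_nat E n.
Proof.
  intro Hn. split; [|split; [|split]].
  - exact (num_transitive Hn).
  - intros y Hy. destruct (num_mem Hn Hy) as [j [_ Hj]]. exact (num_transitive Hj).
  - exact (num_zero_or_succ Hn).
  - intros y Hy. destruct (num_mem Hn Hy) as [j [_ Hj]]. exact (num_zero_or_succ Hj).
Qed.

Lemma tagged_inj j k u u' x : tagged E j u x -> tagged E k u' x -> j = k /\ u = u'.
Proof.
  intros [z [Hz Hp]] [z' [Hz' Hp']].
  destruct (pair_inj Hp Hp') as [<- <-]. split; [exact (num_inj Hz Hz') | reflexivity].
Qed.

Lemma tagged_exists k u : exists x, tagged E k u x.
Proof.
  destruct (num_exists k) as [z Hz], (pair_exists z u) as [x Hx]. exists x, z. auto.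
Qed.

Lemma tagged_unique k u x x' : tagged E k u x -> tagged E k u x' -> x = x'.
Proof.
  intros [z [Hz Hp]] [z' [Hz' Hp']]. rewrite (num_unique Hz' Hz) in Hp'.
  exact (pair_unique Hp Hp').
Qed.

(* [eq_code], [mem_code], [or_code] and [ex_code] are [tagged2] with tags 0, 1, 3 and 4. *)
Definition tagged2 (k : nat) (t u x : M) : Prop := exists q, is_pair E t u q /\ tagged E k q x.

Lemma tagged2_inj j k t u t' u' x : tagged2 j t u x -> tagged2 k t' u' x -> t = t' /\ u = u'.
Proof.
  intros [q [Hq Hx]] [q' [Hq' Hx']]. destruct (tagged_inj Hx Hx') as [_ <-].
  exact (pair_inj Hq Hq').
Qed.

Lemma tagged2_exists k t u : exists x, tagged2 k t u x.
Proof.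
  destruct (pair_exists t u) as [q Hq], (tagged_exists k q) as [x Hx]. exists x, q. auto.
Qed.

Lemma tagged2_unique k t u x x' : tagged2 k t u x -> tagged2 k t u x' -> x = x'.
Proof.
  intros [q [Hq Hx]] [q' [Hq' Hx']]. rewrite (pair_unique Hq' Hq) in Hx'.
  exact (tagged_unique Hx Hx').
Qed.

(* Refutes the context when one element is decoded with two different tags. *)
Ltac tag_clash :=
  exfalso;
  repeat match goal with
  | H : exists _, _ |- _ => destruct H
  | H : _ /\ _ |- _ => destruct H
  | H : _ \/ _ |- _ => destruct H
  | H : eq_code _ _ _ _ |- _ => destruct H
  | H : mem_code _ _ _ _ |- _ => destruct H
  | H : or_code _ _ _ _ |- _ => destruct H
  | H : ex_code _ _ _ _ |- _ => destruct H
  | H : var_code _ _ |- _ => destruct H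
  | H : atom_code _ _ |- _ => destruct H
  | H : neg_code _ _ _ |- _ => unfold neg_code in H
  | H : const_code _ _ _ |- _ => unfold const_code in H
  end;
  match goal with
  | H1 : tagged _ ?j _ ?x, H2 : tagged _ ?k _ ?x |- _ =>
      let Hjk := fresh in destruct (tagged_inj H1 H2) as [Hjk _]; discriminate Hjk
  end.

Lemma code_ctm_unique t c c' : code_ctm E t c -> code_ctm E t c' -> c = c'.
Proof.
  destruct t as [i | a]; cbn.
  - intros [n [Hn Hc]] [n' [Hn' Hc']]. rewrite (num_unique Hn' Hn) in Hc'.
    exact (tagged_unique Hc Hc').
  - apply tagged_unique.
Qed.

Lemma code_var_inj i j c : code_ctm E (cVar i) c -> code_ctm E (cVar j) c -> i = j.
Proof.
  intros [n [Hn Hc]] [n' [Hn' Hc']]. destruct (tagged_inj Hc Hc') as [_ <-].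
  exact (num_inj Hn Hn').
Qed.

Lemma code_ctm_exists t : exists c, code_ctm E t c.
Proof.
  destruct t as [i | a]; cbn; [|apply tagged_exists].
  destruct (num_exists i) as [n Hn], (tagged_exists 0 n) as [c Hc]. eauto.
Qed.

Lemma code_var_is_var_code i v : code_ctm E (cVar i) v -> var_code E v.
Proof. intros [n [Hn Hv]]. exists n. split; [exact (num_is_nat Hn) | exact Hv]. Qed.

Lemma code_ctm_term t c : code_ctm E t c -> term_code E c.
Proof.
  destruct t; cbn; intro Hc; [left; exact (code_var_is_var_code Hc) | right; eauto].
Qed.

Lemma code_cfm_exists f : exists x, code_cfm E f x.
Proof.
  induction f as [t u | t u | g [y Hy] | g [y Hy] g' [z Hz] | i g [y Hy]]; cbn.
  - destruct (code_ctm_exists t) as [ct Ht], (code_ctm_exists u) as [cu Hu],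
      (tagged2_exists 0 ct cu) as [x Hx]. eauto 6.
  - destruct (code_ctm_exists t) as [ct Ht], (code_ctm_exists u) as [cu Hu],
      (tagged2_exists 1 ct cu) as [x Hx]. eauto 6.
  - destruct (tagged_exists 2 y) as [x Hx]. eauto.
  - destruct (tagged2_exists 3 y z) as [x Hx]. eauto 6.
  - destruct (code_ctm_exists (cVar i)) as [v Hv], (tagged2_exists 4 v y) as [x Hx]. eauto 6.
Qed.

Lemma code_cfm_unique f x x' : code_cfm E f x -> code_cfm E f x' -> x = x'.
Proof.
  revert x x'.
  induction f as [t u | t u | g IH | g IH g' IH' | i g IH]; cbn [code_cfm]; intros x x'.
  - intros [ct [cu [Ht [Hu Hx]]]] [ct' [cu' [Ht' [Hu' Hx']]]].
    rewrite (code_ctm_unique Ht' Ht), (code_ctm_unique Hu' Hu) in Hx'.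
    exact (tagged2_unique Hx Hx').
  - intros [ct [cu [Ht [Hu Hx]]]] [ct' [cu' [Ht' [Hu' Hx']]]].
    rewrite (code_ctm_unique Ht' Ht), (code_ctm_unique Hu' Hu) in Hx'.
    exact (tagged2_unique Hx Hx').
  - intros [y [Hy Hx]] [y' [Hy' Hx']]. rewrite (IH _ _ Hy' Hy) in Hx'.
    exact (tagged_unique Hx Hx').
  - intros [y [z [Hy [Hz Hx]]]] [y' [z' [Hy' [Hz' Hx']]]].
    rewrite (IH _ _ Hy' Hy), (IH' _ _ Hz' Hz) in Hx'. exact (tagged2_unique Hx Hx').
  - intros [v [y [Hv [Hy Hx]]]] [v' [y' [Hv' [Hy' Hx']]]].
    rewrite (code_ctm_unique Hv' Hv), (IH _ _ Hy' Hy) in Hx'. exact (tagged2_unique Hx Hx').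
Qed.

(** * Witness sets and depth *)

Definition included (a b : M) : Prop := forall z, E z a -> E z b.

Lemma pair_in_mono h h' x y : included h h' -> pair_in E h x y -> pair_in E h' x y.
Proof. intros Hhh' [w [Hw Hp]]. exists w. auto. Qed.

(* [depth_witness E] and [subst_witness E v c] unfold to [rule_witness depth_rule] and
   [rule_witness (subst_rule v c)] for the rules below, and [subst E v c] to
   [witnessed (subst_rule v c)]. *)
Definition rule_witness (R : M -> M -> M -> Prop) (h : M) : Prop :=
  forall w, E w h -> exists x y, is_pair E x y w /\ R h x y.

Definition witnessed (R : M -> M -> M -> Prop) (x y : M) : Prop :=
  exists h, rule_witness R h /\ pair_in E h x y.

Definition rule_monotone (R : M -> M -> M -> Prop) : Prop :=
  forall h h' x y, included h h' -> R h x y -> R h' x y.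

Lemma witnessed_rule R x y : witnessed R x y -> exists h, rule_witness R h /\ R h x y.
Proof.
  intros [h [Hh [w [Hw Hp]]]]. exists h. split; [exact Hh|].
  destruct (Hh w Hw) as [x' [y' [Hp' HR]]].
  destruct (pair_inj Hp' Hp) as [<- <-]. exact HR.
Qed.

Lemma rule_witness_adjoin R h1 h2 x y : rule_monotone R ->
  rule_witness R h1 -> rule_witness R h2 ->
  (forall h, included h1 h -> included h2 h -> R h x y) -> witnessed R x y.
Proof.
  intros Hmono H1 H2 HR.
  destruct (pair_exists x y) as [w Hw], (union2_exists h1 h2) as [h12 H12],
    (adjoin_exists h12 w) as [h Hh].
  assert (Hh1 : included h1 h) by (intros z Hz; apply Hh; left; apply H12; auto).
  assert (Hh2 : included h2 h) by (intros z Hz; apply Hh; left; apply H12; auto).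
  exists h. split; [|exists w; split; [apply Hh; auto | exact Hw]].
  intros z Hz. apply Hh in Hz as [Hz | ->]; [apply H12 in Hz as [Hz | Hz] | eauto].
  - destruct (H1 z Hz) as [x' [y' [Hp HR']]]. eauto.
  - destruct (H2 z Hz) as [x' [y' [Hp HR']]]. eauto.
Qed.

Lemma witnessed_base R x y : rule_monotone R -> (forall h, R h x y) -> witnessed R x y.
Proof.
  intros Hmono HR.
  apply (@rule_witness_adjoin R empty empty); auto; intros w Hw; destruct (empty_is_empty _ Hw).
Qed.

Lemma witnessed_step R x1 y1 x2 y2 x y : rule_monotone R ->
  witnessed R x1 y1 -> witnessed R x2 y2 ->
  (forall h, pair_in E h x1 y1 -> pair_in E h x2 y2 -> R h x y) -> witnessed R x y.
Proof.
  intros Hmono [h1 [H1 P1]] [h2 [H2 P2]] HR.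
  apply (rule_witness_adjoin Hmono H1 H2). intros h Hh1 Hh2.
  apply HR; [exact (pair_in_mono Hh1 P1) | exact (pair_in_mono Hh2 P2)].
Qed.

Definition depth_rule (h x d : M) : Prop :=
  is_nat E d /\
  ( atom_code E x
  \/ (exists y d', neg_code E y x /\ E d' d /\ pair_in E h y d')
  \/ (exists y z d1 d2, or_code E y z x /\ E d1 d /\ E d2 d /\
                        pair_in E h y d1 /\ pair_in E h z d2)
  \/ (exists v y d', var_code E v /\ ex_code E v y x /\ E d' d /\ pair_in E h y d')).

Definition has_depth (x d : M) : Prop := witnessed depth_rule x d.

Lemma depth_rule_mono : rule_monotone depth_rule.
Proof.
  intros h h' x d Hhh' [Hd R]. split; [exact Hd|].
  destruct R as [R | [(y & d' & R) | [(y & z & d1 & d2 & R) | (v & y & d' & R)]]].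
  - left. exact R.
  - right; left. exists y, d'. intuition eauto using pair_in_mono.
  - right; right; left. exists y, z, d1, d2. intuition eauto using pair_in_mono.
  - right; right; right. exists v, y, d'. intuition eauto using pair_in_mono.
Qed.

Inductive subformula_code (y x : M) : Prop :=
  | sub_neg : neg_code E y x -> subformula_code y x
  | sub_or_l z : or_code E y z x -> subformula_code y x
  | sub_or_r z : or_code E z y x -> subformula_code y x
  | sub_ex v : ex_code E v y x -> subformula_code y x.

Lemma has_depth_nat x d : has_depth x d -> is_nat E d.
Proof. intro Hx. destruct (witnessed_rule Hx) as [h [_ [Hd _]]]. exact Hd. Qed.

Lemma has_depth_sub x d y : has_depth x d -> subformula_code y x ->
  exists d', E d' d /\ has_depth y d'.
Proof.
  intros Hx Hsub. destruct (witnessed_rule Hx) as [h [Hh [_ R]]].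
  destruct Hsub as [Hneg | z Hor | z Hor | v Hex];
    destruct R as [R | [R | [R | R]]]; try tag_clash.
  - destruct R as (y' & d' & Hneg' & Hd' & P).
    rewrite (proj2 (tagged_inj Hneg' Hneg)) in P. exists d'. split; [exact Hd' | exists h; auto].
  - destruct R as (y' & z' & d1 & d2 & Hor' & Hd1 & _ & P & _).
    destruct (tagged2_inj Hor' Hor) as [-> _]. exists d1. split; [exact Hd1 | exists h; auto].
  - destruct R as (y' & z' & d1 & d2 & Hor' & _ & Hd2 & _ & P).
    destruct (tagged2_inj Hor' Hor) as [_ ->]. exists d2. split; [exact Hd2 | exists h; auto].
  - destruct R as (v' & y' & d' & _ & Hex' & Hd' & P).
    destruct (tagged2_inj Hex' Hex) as [_ ->]. exists d'. split; [exact Hd' | exists h; auto].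
Qed.

Lemma has_depth_ex_var x d v y : has_depth x d -> ex_code E v y x -> var_code E v.
Proof.
  intros Hx Hex. destruct (witnessed_rule Hx) as [h [_ [_ R]]].
  destruct R as [R | [R | [R | R]]]; try tag_clash.
  destruct R as (v' & y' & d' & Hv & Hex' & _).
  destruct (tagged2_inj Hex' Hex) as [<- _]. exact Hv.
Qed.

Lemma has_depth_atom x d : is_nat E d -> atom_code E x -> has_depth x d.
Proof.
  intros Hd Hx. apply (witnessed_base depth_rule_mono). intro h.
  split; [exact Hd | left; exact Hx].
Qed.

Lemma has_depth_neg x y d d' : is_nat E d -> E d' d -> has_depth y d' -> neg_code E y x ->
  has_depth x d.
Proof.
  intros Hd Hd' Hy Hneg. apply (witnessed_step depth_rule_mono Hy Hy). intros h P _.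
  split; [exact Hd|]. right; left. exists y, d'. auto.
Qed.

Lemma has_depth_or x y z d d1 d2 : is_nat E d -> E d1 d -> E d2 d ->
  has_depth y d1 -> has_depth z d2 -> or_code E y z x -> has_depth x d.
Proof.
  intros Hd Hd1 Hd2 Hy Hz Hor. apply (witnessed_step depth_rule_mono Hy Hz). intros h Py Pz.
  split; [exact Hd|]. right; right; left. exists y, z, d1, d2. auto.
Qed.

Lemma has_depth_ex x v y d d' : is_nat E d -> var_code E v -> E d' d -> has_depth y d' ->
  ex_code E v y x -> has_depth x d.
Proof.
  intros Hd Hv Hd' Hy Hex. apply (witnessed_step depth_rule_mono Hy Hy). intros h P _.
  split; [exact Hd|]. right; right; right. exists v, y, d'. auto.
Qed.

Lemma form_depth_le_intro x d p : is_nat E p -> has_depth x d -> E d p \/ d = p ->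
  form_depth_le E x p.
Proof. intros Hp [h [Hh P]] Hdp. split; [exact Hp|]. exists h, d. auto. Qed.

Lemma form_depth_le_elim x p : form_depth_le E x p -> exists d, has_depth x d /\ (E d p \/ d = p).
Proof. intros [_ [h [d [Hh [P Hdp]]]]]. exists d. split; [exists h; auto | exact Hdp]. Qed.

Lemma form_depth_le_sub x p y : form_depth_le E x p -> subformula_code y x ->
  exists d, E d p /\ has_depth y d.
Proof.
  intros Hx Hsub. destruct (form_depth_le_elim Hx) as [d [Hd Hdp]].
  destruct (has_depth_sub Hd Hsub) as [d' [Hd'd Hy]]. exists d'. split; [|exact Hy].
  destruct Hdp as [Hdp | <-]; [exact (proj1 (proj1 Hx) _ _ Hd'd Hdp) | exact Hd'd].
Qed.

Lemma form_depth_le_sub_le x p y : form_depth_le E x p -> subformula_code y x ->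
  form_depth_le E y p.
Proof.
  intros Hx Hsub. destruct (form_depth_le_sub Hx Hsub) as [d [Hdp Hy]].
  exact (form_depth_le_intro (proj1 Hx) Hy (or_introl Hdp)).
Qed.

Lemma form_depth_le_num_sub k m n x y : is_num E k m -> is_num E (S k) n ->
  form_depth_le E x n -> subformula_code y x -> form_depth_le E y m.
Proof.
  intros Hm Hn Hx Hsub. destruct (form_depth_le_sub Hx Hsub) as [d [Hdn Hy]].
  exact (form_depth_le_intro (num_is_nat Hm) Hy (proj1 (num_succ_mem _ Hm Hn) Hdn)).
Qed.

Lemma form_depth_le_num0_sub n x y : is_num E 0 n -> form_depth_le E x n ->
  ~ subformula_code y x.
Proof.
  intros Hn Hx Hsub. destruct (form_depth_le_sub Hx Hsub) as [d [Hdn _]]. exact (Hn d Hdn).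
Qed.

Lemma form_depth_le_num_mem k m n y : is_num E k m -> is_num E (S k) n ->
  form_depth_le E y m -> exists d, E d n /\ has_depth y d.
Proof.
  intros Hm Hn Hy. destruct (form_depth_le_elim Hy) as [d [Hd Hdm]].
  exists d. split; [exact (proj2 (num_succ_mem _ Hm Hn) Hdm) | exact Hd].
Qed.

Fixpoint cfm_depth (f : cfm M) : nat :=
  match f with
  | cEq _ _ | cIn _ _ => 0
  | cNot g | cEx _ g => S (cfm_depth g)
  | cOr g g' => S (Nat.max (cfm_depth g) (cfm_depth g'))
  end.

Lemma code_atom_code t u ct cu x : code_ctm E t ct -> code_ctm E u cu ->
  eq_code E ct cu x \/ mem_code E ct cu x -> atom_code E x.
Proof. intros Ht Hu Hx. exists ct, cu. split; [|split]; eauto using code_ctm_term. Qed.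

Lemma code_has_depth f x n : code_cfm E f x -> is_num E (cfm_depth f) n -> has_depth x n.
Proof.
  revert x n.
  induction f as [t u | t u | g IH | g IH g' IH' | i g IH]; cbn [code_cfm cfm_depth];
    intros x n Hx Hn; pose proof (num_is_nat Hn) as Hnat.
  - destruct Hx as (ct & cu & Ht & Hu & Hx).
    exact (has_depth_atom Hnat (code_atom_code Ht Hu (or_introl Hx))).
  - destruct Hx as (ct & cu & Ht & Hu & Hx).
    exact (has_depth_atom Hnat (code_atom_code Ht Hu (or_intror Hx))).
  - destruct Hx as [y [Hy Hx]], (num_exists (cfm_depth g)) as [m Hm].
    exact (has_depth_neg Hnat (num_lt_mem (Nat.lt_succ_diag_r _) Hm Hn) (IH _ _ Hy Hm) Hx).
  - destruct Hx as [y [z [Hy [Hz Hx]]]].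
    destruct (num_exists (cfm_depth g)) as [m Hm], (num_exists (cfm_depth g')) as [m' Hm'].
    refine (has_depth_or Hnat _ _ (IH _ _ Hy Hm) (IH' _ _ Hz Hm') Hx);
      refine (num_lt_mem _ _ Hn); [| exact Hm | | exact Hm']; lia.
  - destruct Hx as [v [y [Hv [Hy Hx]]]], (num_exists (cfm_depth g)) as [m Hm].
    exact (has_depth_ex Hnat (code_var_is_var_code Hv)
             (num_lt_mem (Nat.lt_succ_diag_r _) Hm Hn) (IH _ _ Hy Hm) Hx).
Qed.

Lemma code_form_depth_le f x : code_cfm E f x ->
  exists n, is_num E (cfm_depth f) n /\ form_depth_le E x n.
Proof.
  intro Hx. destruct (num_exists (cfm_depth f)) as [n Hn]. exists n. split; [exact Hn|].
  exact (form_depth_le_intro (num_is_nat Hn) (code_has_depth Hx Hn) (or_intror eq_refl)).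
Qed.

Fixpoint same_shape (f g : cfm M) : Prop :=
  match f, g with
  | cEq _ _, cEq _ _ | cIn _ _, cIn _ _ => True
  | cNot f1, cNot g1 | cEx _ f1, cEx _ g1 => same_shape f1 g1
  | cOr f1 f2, cOr g1 g2 => same_shape f1 g1 /\ same_shape f2 g2
  | _, _ => False
  end.

Lemma inst_same_shape g (s s' : nat -> M) b b' : same_shape (inst s b g) (inst s' b' g).
Proof. revert b b'. induction g; cbn; auto. Qed.

Lemma same_shape_has_depth f g x x' d : same_shape f g ->
  code_cfm E f x -> code_cfm E g x' -> has_depth x d -> has_depth x' d.
Proof.
  revert g x x' d.
  induction f as [t u | t u | f IH | f IH f' IH' | i f IH];
    intros [t2 u2 | t2 u2 | g | g g' | i2 g] x x' d Hs Hx Hx' Hd; cbn [same_shape code_cfm] in *;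
    try contradiction; pose proof (has_depth_nat Hd) as Hnat.
  - destruct Hx' as (ct & cu & Ht & Hu & Hx').
    exact (has_depth_atom Hnat (code_atom_code Ht Hu (or_introl Hx'))).
  - destruct Hx' as (ct & cu & Ht & Hu & Hx').
    exact (has_depth_atom Hnat (code_atom_code Ht Hu (or_intror Hx'))).
  - destruct Hx as (y & Hy & Hx), Hx' as (y' & Hy' & Hx').
    destruct (has_depth_sub Hd (sub_neg Hx)) as [d' [Hd' Hyd]].
    exact (has_depth_neg Hnat Hd' (IH _ _ _ _ Hs Hy Hy' Hyd) Hx').
  - destruct Hx as (y & z & Hy & Hz & Hx), Hx' as (y' & z' & Hy' & Hz' & Hx'), Hs as [Hs Hs'].
    destruct (has_depth_sub Hd (sub_or_l Hx)) as [d1 [Hd1 Hyd]],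
      (has_depth_sub Hd (sub_or_r Hx)) as [d2 [Hd2 Hzd]].
    exact (has_depth_or Hnat Hd1 Hd2 (IH _ _ _ _ Hs Hy Hy' Hyd) (IH' _ _ _ _ Hs' Hz Hz' Hzd) Hx').
  - destruct Hx as (v & y & _ & Hy & Hx), Hx' as (v' & y' & Hv' & Hy' & Hx').
    destruct (has_depth_sub Hd (sub_ex Hx)) as [d' [Hd' Hyd]].
    exact (has_depth_ex Hnat (code_var_is_var_code Hv') Hd' (IH _ _ _ _ Hs Hy Hy' Hyd) Hx').
Qed.

Lemma same_shape_form_depth_le f g x x' p : same_shape f g ->
  code_cfm E f x -> code_cfm E g x' -> form_depth_le E x p -> form_depth_le E x' p.
Proof.
  intros Hs Hx Hx' Hxp. destruct (form_depth_le_elim Hxp) as [d [Hd Hdp]].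
  exact (form_depth_le_intro (proj1 Hxp) (same_shape_has_depth Hs Hx Hx' Hd) Hdp).
Qed.

Lemma inst_tm_spec (s : nat -> M) b i :
  (In i b /\ inst_tm s b i = cVar i) \/ (~ In i b /\ inst_tm s b i = cCon (s i)).
Proof.
  unfold inst_tm. destruct (existsb (Nat.eqb i) b) eqn:Hb; [left | right].
  - apply existsb_exists in Hb as [j [Hj Hij]]. apply Nat.eqb_eq in Hij as ->. auto.
  - split; [|reflexivity]. intro Hi.
    assert (existsb (Nat.eqb i) b = true)
      by (apply existsb_exists; exists i; auto using Nat.eqb_refl).
    congruence.
Qed.

Lemma code_inst_tm_var s b i v : code_ctm E (inst_tm s b i) v -> var_code E v ->
  exists j, In j b /\ code_ctm E (cVar j) v.
Proof.
  intros Hc Hv. destruct (inst_tm_spec s b i) as [[Hi Heq] | [_ Heq]]; rewrite Heq in Hc;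
    [eauto | cbn in Hc; tag_clash].
Qed.

Lemma free_var_bound v h f : free_witness E v h -> var_code E v ->
  forall s b x, code_cfm E (inst s b f) x -> E x h -> exists j, In j b /\ code_ctm E (cVar j) v.
Proof.
  intros Hh Hv.
  induction f as [i j | i j | g IH | g IH g' IH' | k g IH]; intros s b x Hx Hxh;
    cbn [inst code_cfm] in Hx; destruct (Hh x Hxh) as [C | [C | [C | C]]]; try tag_clash.
  - destruct Hx as (ct & cu & Hct & Hcu & Hx), C as (t & u & [Ht | Ht] & Htu); [|tag_clash].
    destruct (tagged2_inj Ht Hx) as [-> ->].
    destruct Htu as [<- | <-]; eauto using code_inst_tm_var.
  - destruct Hx as (ct & cu & Hct & Hcu & Hx), C as (t & u & [Ht | Ht] & Htu); [tag_clash|].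
    destruct (tagged2_inj Ht Hx) as [-> ->].
    destruct Htu as [<- | <-]; eauto using code_inst_tm_var.
  - destruct Hx as (y & Hy & Hx), C as (y' & Hneg & Hy'h).
    rewrite (proj2 (tagged_inj Hneg Hx)) in Hy'h. eauto.
  - destruct Hx as (y & z & Hy & Hz & Hx), C as (y' & z' & Hor & Hh').
    destruct (tagged2_inj Hor Hx) as [-> ->]. destruct Hh'; eauto.
  - destruct Hx as (w & y & Hw & Hy & Hx), C as (w' & y' & Hex & Hwv & Hy'h).
    destruct (tagged2_inj Hex Hx) as [-> ->].
    destruct (IH _ _ _ Hy Hy'h) as [j [[<- | Hj] Hcj]]; [|eauto].
    contradiction (Hwv (code_ctm_unique Hw Hcj)).
Qed.

Lemma code_is_sentence f (s : nat -> M) x : code_cfm E (inst s nil f) x -> is_sentence E x.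
Proof.
  intro Hx. split.
  - destruct (code_form_depth_le Hx) as [n [_ Hn]]. exists n. exact Hn.
  - intros [v [Hv [h [Hh Hxh]]]]. destruct (free_var_bound Hh Hv Hx Hxh) as [j [[] _]].
Qed.

(** * Substitution *)

Definition subst_rule (v c h x x' : M) : Prop :=
    (exists t u t' u', subst_term v c t t' /\ subst_term v c u u' /\
       ((eq_code E t u x /\ eq_code E t' u' x') \/ (mem_code E t u x /\ mem_code E t' u' x')))
  \/ (exists y y', neg_code E y x /\ neg_code E y' x' /\ pair_in E h y y')
  \/ (exists y z y' z', or_code E y z x /\ or_code E y' z' x' /\
                        pair_in E h y y' /\ pair_in E h z z')
  \/ (exists y, ex_code E v y x /\ x' = x)
  \/ (exists u y y', ex_code E u y x /\ u <> v /\ ex_code E u y' x' /\ pair_in E h y y').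

Lemma subst_rule_mono v c : rule_monotone (subst_rule v c).
Proof.
  intros h h' x x' Hhh' R.
  destruct R as [R | [(y & y' & R) | [(y & z & y' & z' & R) | [R | (u & y & y' & R)]]]].
  - left. exact R.
  - right; left. exists y, y'. intuition eauto using pair_in_mono.
  - right; right; left. exists y, z, y', z'. intuition eauto using pair_in_mono.
  - right; right; right; left. exact R.
  - right; right; right; right. exists u, y, y'. intuition eauto using pair_in_mono.
Qed.

Lemma subst_eq_inv v c x x' t u : subst E v c x x' -> eq_code E t u x ->
  exists t' u', subst_term v c t t' /\ subst_term v c u u' /\ eq_code E t' u' x'.
Proof.
  intros Hs Hx. destruct (witnessed_rule Hs) as [h [_ R]].
  destruct R as [R | [R | [R | [R | R]]]]; try tag_clash.
  destruct R as (t0 & u0 & t' & u' & St & Su & [[Hx0 Hx'] | [Hx0 _]]); [|tag_clash].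
  destruct (tagged2_inj Hx0 Hx) as [-> ->]. eauto.
Qed.

Lemma subst_mem_inv v c x x' t u : subst E v c x x' -> mem_code E t u x ->
  exists t' u', subst_term v c t t' /\ subst_term v c u u' /\ mem_code E t' u' x'.
Proof.
  intros Hs Hx. destruct (witnessed_rule Hs) as [h [_ R]].
  destruct R as [R | [R | [R | [R | R]]]]; try tag_clash.
  destruct R as (t0 & u0 & t' & u' & St & Su & [[Hx0 _] | [Hx0 Hx']]); [tag_clash|].
  destruct (tagged2_inj Hx0 Hx) as [-> ->]. eauto.
Qed.

Lemma subst_neg_inv v c x x' y : subst E v c x x' -> neg_code E y x ->
  exists y', neg_code E y' x' /\ subst E v c y y'.
Proof.
  intros Hs Hx. destruct (witnessed_rule Hs) as [h [Hh R]].
  destruct R as [R | [R | [R | [R | R]]]]; try tag_clash.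
  destruct R as (y0 & y' & Hx0 & Hx' & P). rewrite (proj2 (tagged_inj Hx0 Hx)) in P.
  exists y'. split; [exact Hx' | exists h; auto].
Qed.

Lemma subst_or_inv v c x x' y z : subst E v c x x' -> or_code E y z x ->
  exists y' z', or_code E y' z' x' /\ subst E v c y y' /\ subst E v c z z'.
Proof.
  intros Hs Hx. destruct (witnessed_rule Hs) as [h [Hh R]].
  destruct R as [R | [R | [R | [R | R]]]]; try tag_clash.
  destruct R as (y0 & z0 & y' & z' & Hx0 & Hx' & Py & Pz).
  destruct (tagged2_inj Hx0 Hx) as [-> ->].
  exists y', z'. split; [exact Hx' | split; exists h; auto].
Qed.

Lemma subst_ex_inv v c x x' u y : subst E v c x x' -> ex_code E u y x ->
  (u = v /\ x' = x) \/ (u <> v /\ exists y', ex_code E u y' x' /\ subst E v c y y').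
Proof.
  intros Hs Hx. destruct (witnessed_rule Hs) as [h [Hh R]].
  destruct R as [R | [R | [R | [R | R]]]]; try tag_clash.
  - destruct R as (y0 & Hx0 & ->). destruct (tagged2_inj Hx0 Hx) as [-> _]. auto.
  - destruct R as (u0 & y0 & y' & Hx0 & Huv & Hx' & P).
    destruct (tagged2_inj Hx0 Hx) as [-> ->]. right. split; [exact Huv|].
    exists y'. split; [exact Hx' | exists h; auto].
Qed.

Lemma subst_term_exists (v c t : M) : exists t', subst_term v c t t'.
Proof.
  destruct (classic (t = v)) as [Htv | Htv]; [exists c; left | exists t; right]; auto.
Qed.

Lemma subst_exists v c f y : code_cfm E f y -> exists y', subst E v c y y'.
Proof.
  revert y. induction f as [t u | t u | g IH | g IH g' IH' | i g IH]; cbn [code_cfm]; intros y Hy.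
  - destruct Hy as (ct & cu & _ & _ & Hy), (subst_term_exists v c ct) as [t' St],
      (subst_term_exists v c cu) as [u' Su], (tagged2_exists 0 t' u') as [y' Hy'].
    exists y'. apply (witnessed_base (@subst_rule_mono v c)). intro h.
    left. exists ct, cu, t', u'. auto.
  - destruct Hy as (ct & cu & _ & _ & Hy), (subst_term_exists v c ct) as [t' St],
      (subst_term_exists v c cu) as [u' Su], (tagged2_exists 1 t' u') as [y' Hy'].
    exists y'. apply (witnessed_base (@subst_rule_mono v c)). intro h.
    left. exists ct, cu, t', u'. auto.
  - destruct Hy as (y1 & Hy1 & Hy), (IH _ Hy1) as [y1' Hs1], (tagged_exists 2 y1') as [y' Hy'].
    exists y'. apply (witnessed_step (@subst_rule_mono v c) Hs1 Hs1). intros h P _.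
    right; left. exists y1, y1'. auto.
  - destruct Hy as (y1 & z1 & Hy1 & Hz1 & Hy), (IH _ Hy1) as [y1' Hs1], (IH' _ Hz1) as [z1' Hs2],
      (tagged2_exists 3 y1' z1') as [y' Hy'].
    exists y'. apply (witnessed_step (@subst_rule_mono v c) Hs1 Hs2). intros h P1 P2.
    right; right; left. exists y1, z1, y1', z1'. auto.
  - destruct Hy as (w & y1 & _ & Hy1 & Hy).
    destruct (classic (w = v)) as [-> | Hwv].
    + exists y. apply (witnessed_base (@subst_rule_mono v c)). intro h.
      right; right; right; left. eauto.
    + destruct (IH _ Hy1) as [y1' Hs1], (tagged2_exists 4 w y1') as [y' Hy'].
      exists y'. apply (witnessed_step (@subst_rule_mono v c) Hs1 Hs1). intros h P _.
      right; right; right; right. exists w, y1, y1'. auto.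
Qed.

Lemma upd_same (s : nat -> M) i a : upd s i a i = a.
Proof. unfold upd. now rewrite Nat.eqb_refl. Qed.

Lemma upd_other (s : nat -> M) i a j : j <> i -> upd s i a j = s j.
Proof. intro Hji. unfold upd. apply Nat.eqb_neq in Hji. now rewrite Hji. Qed.

Lemma inst_tm_ext (s s' : nat -> M) b b' j : (forall j, In j b <-> In j b') ->
  (forall j, ~ In j b -> s j = s' j) -> inst_tm s b j = inst_tm s' b' j.
Proof.
  intros Hb Hs.
  destruct (inst_tm_spec s b j) as [[Hj ->] | [Hj ->]],
    (inst_tm_spec s' b' j) as [[Hj' ->] | [Hj' ->]];
    [reflexivity | exfalso; apply Hj', Hb, Hj | exfalso; apply Hj, Hb, Hj' | now rewrite Hs].
Qed.

Lemma inst_ext g (s s' : nat -> M) b b' : (forall j, In j b <-> In j b') ->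
  (forall j, ~ In j b -> s j = s' j) -> inst s b g = inst s' b' g.
Proof.
  revert s s' b b'.
  induction g as [i j | i j | g IH | g IH g' IH' | k g IH]; intros s s' b b' Hb Hs; cbn [inst];
    f_equal; auto using inst_tm_ext.
  apply IH.
  - intro j. cbn. rewrite Hb. reflexivity.
  - intros j Hj. apply Hs. intro. apply Hj. now right.
Qed.

Lemma code_inst_tm_subst s b i j a v ca t t' : In i b -> code_ctm E (cVar i) v ->
  const_code E a ca -> code_ctm E (inst_tm s b j) t -> subst_term v ca t t' ->
  code_ctm E (inst_tm (upd s i a) (remove Nat.eq_dec i b) j) t'.
Proof.
  intros Hi Hv Hca Ht Hst.
  destruct (inst_tm_spec (upd s i a) (remove Nat.eq_dec i b) j) as [[Hj' ->] | [Hj' ->]];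
    destruct (inst_tm_spec s b j) as [[Hj Heq] | [Hj Heq]]; rewrite Heq in Ht.
  - apply in_remove in Hj' as [_ Hji].
    destruct Hst as [[-> _] | [_ ->]]; [contradiction (Hji (code_var_inj Ht Hv)) | exact Ht].
  - exfalso. apply in_remove in Hj' as [Hj' _]. contradiction.
  - destruct (Nat.eq_dec j i) as [-> | Hji]; [|contradiction (Hj' (in_in_remove _ _ Hji Hj))].
    destruct Hst as [[_ ->] | [Htv _]]; [cbn; now rewrite upd_same|].
    contradiction (Htv (code_ctm_unique Ht Hv)).
  - assert (Hji : j <> i) by (intros ->; contradiction).
    cbn in *. rewrite upd_other by exact Hji.
    destruct Hst as [[-> _] | [_ ->]]; [apply code_var_is_var_code in Hv; tag_clash | exact Ht].
Qed.

Lemma subst_code i a v ca g : code_ctm E (cVar i) v -> const_code E a ca ->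
  forall s b y y', In i b -> code_cfm E (inst s b g) y -> subst E v ca y y' ->
  code_cfm E (inst (upd s i a) (remove Nat.eq_dec i b) g) y'.
Proof.
  intros Hv Hca.
  induction g as [j k | j k | g IH | g IH g' IH' | k g IH]; intros s b y y' Hi Hy Hs;
    cbn [inst code_cfm] in *.
  - destruct Hy as (ct & cu & Ht & Hu & Hy), (subst_eq_inv Hs Hy) as (t' & u' & St & Su & Hy').
    exists t', u'. eauto using code_inst_tm_subst.
  - destruct Hy as (ct & cu & Ht & Hu & Hy), (subst_mem_inv Hs Hy) as (t' & u' & St & Su & Hy').
    exists t', u'. eauto using code_inst_tm_subst.
  - destruct Hy as (y1 & Hy1 & Hy), (subst_neg_inv Hs Hy) as (y1' & Hy' & Hs1). eauto.
  - destruct Hy as (y1 & z1 & Hy1 & Hz1 & Hy),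
      (subst_or_inv Hs Hy) as (y1' & z1' & Hy' & Hs1 & Hs2).
    exists y1', z1'. eauto.
  - destruct Hy as (w & y1 & Hw & Hy1 & Hy).
    destruct (subst_ex_inv Hs Hy) as [[-> ->] | [Hwv (y1' & Hy' & Hs1)]].
    + pose proof (code_var_inj Hw Hv) as ->. exists v, y1. split; [exact Hw | split; [|exact Hy]].
      erewrite <- inst_ext; [exact Hy1 | |].
      * intro j. cbn. destruct (Nat.eq_dec i j) as [-> | Hij]; [tauto|].
        split; intros [Hj | Hj]; auto; right;
          [apply in_in_remove | apply in_remove in Hj as []]; auto.
      * intros j Hj. symmetry. apply upd_other. intros ->. apply Hj. now left.
    + assert (Hki : k <> i) by (intros ->; contradiction (Hwv (code_ctm_unique Hw Hv))).
      exists w, y1'. split; [exact Hw | split; [|exact Hy']].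
      replace (k :: remove Nat.eq_dec i b) with (remove Nat.eq_dec i (k :: b)).
      * apply (IH s (k :: b) y1 y1'); auto. now right.
      * cbn. destruct (Nat.eq_dec i k); congruence.
Qed.

Lemma subst_iff i a v ca g (s : nat -> M) y : code_ctm E (cVar i) v -> const_code E a ca ->
  code_cfm E (inst s [i] g) y ->
  forall y', subst E v ca y y' <-> code_cfm E (inst (upd s i a) nil g) y'.
Proof.
  intros Hv Hca Hy y'.
  assert (Hsound : forall y'', subst E v ca y y'' -> code_cfm E (inst (upd s i a) nil g) y'').
  { intros y'' Hs. pose proof (subst_code Hv Hca (b := [i]) (or_introl eq_refl) Hy Hs) as Hc.
    cbn in Hc. destruct (Nat.eq_dec i i); [exact Hc | contradiction]. }
  split; [exact (Hsound y')|]. intro Hy'.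
  destruct (subst_exists v ca Hy) as [y'' Hs].
  rewrite <- (code_cfm_unique (Hsound y'' Hs) Hy'). exact Hs.
Qed.

(** * Truth classes *)

Lemma truth_class_sat T p phi : depth_truth_class E T p ->
  forall s x, code_cfm E (inst s nil phi) x -> form_depth_le E x p -> (T x <-> sat E s phi).
Proof.
  intros [_ HT]. induction phi as [i j | i j | g IH | g IH g' IH' | k g IH]; intros s x Hx Hxp;
    destruct (HT x (code_is_sentence Hx) Hxp) as (Hat & Hneg & Hor & Hex);
    cbn [inst code_cfm sat] in *.
  - destruct Hx as (ct & cu & Ht & Hu & Hx). exact (proj1 (Hat (s i) (s j) ct cu Ht Hu) Hx).
  - destruct Hx as (ct & cu & Ht & Hu & Hx). exact (proj2 (Hat (s i) (s j) ct cu Ht Hu) Hx).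
  - destruct Hx as (y & Hy & Hx).
    rewrite (Hneg y Hx), (IH s y Hy (form_depth_le_sub_le Hxp (sub_neg Hx))). reflexivity.
  - destruct Hx as (y & z & Hy & Hz & Hx).
    rewrite (Hor y z Hx), (IH s y Hy (form_depth_le_sub_le Hxp (sub_or_l Hx))),
      (IH' s z Hz (form_depth_le_sub_le Hxp (sub_or_r Hx))). reflexivity.
  - destruct Hx as (v & y & Hv & Hy & Hx). rewrite (Hex v y Hx).
    pose proof (form_depth_le_sub_le Hxp (sub_ex Hx)) as Hyp.
    pose proof (fun a => inst_same_shape g s (upd s k a) [k] nil) as Hshape.
    split.
    + intros (a & ca & y' & Hca & Hs & HTy). exists a.
      apply (subst_iff Hv Hca Hy) in Hs.
      exact (proj1 (IH _ _ Hs (same_shape_form_depth_le (Hshape a) Hy Hs Hyp)) HTy).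
    + intros [a Ha]. destruct (tagged_exists 1 a) as [ca Hca],
        (code_cfm_exists (inst (upd s k a) nil g)) as [y' Hy'].
      exists a, ca, y'. split; [exact Hca | split; [exact (proj2 (subst_iff Hv Hca Hy y') Hy')|]].
      exact (proj2 (IH _ _ Hy' (same_shape_form_depth_le (Hshape a) Hy Hy' Hyp)) Ha).
Qed.

Lemma has_depth_cases x d : has_depth x d ->
  atom_code E x \/ (exists y, neg_code E y x) \/ (exists y z, or_code E y z x) \/
  (exists v y, ex_code E v y x).
Proof.
  intro Hx. destruct (witnessed_rule Hx) as [h [_ [_ R]]].
  destruct R as [R | [(y & _ & R & _) | [(y & z & _ & _ & R & _) | (v & y & _ & _ & R & _)]]];
    eauto 6.
Qed.

Lemma form_depth_le_atom x n : is_nat E n -> atom_code E x -> form_depth_le E x n.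
Proof. intros Hn Hx. exact (form_depth_le_intro Hn (has_depth_atom Hn Hx) (or_intror eq_refl)). Qed.

Lemma form_depth_le_num_neg k m n x y : is_num E k m -> is_num E (S k) n ->
  form_depth_le E y m -> neg_code E y x -> form_depth_le E x n.
Proof.
  intros Hm Hn Hy Hx. pose proof (num_is_nat Hn) as Hnat.
  destruct (form_depth_le_num_mem Hm Hn Hy) as [d [Hd Hyd]].
  exact (form_depth_le_intro Hnat (has_depth_neg Hnat Hd Hyd Hx) (or_intror eq_refl)).
Qed.

Lemma form_depth_le_num_or k m n x y z : is_num E k m -> is_num E (S k) n ->
  form_depth_le E y m -> form_depth_le E z m -> or_code E y z x -> form_depth_le E x n.
Proof.
  intros Hm Hn Hy Hz Hx. pose proof (num_is_nat Hn) as Hnat.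
  destruct (form_depth_le_num_mem Hm Hn Hy) as [d1 [Hd1 Hyd]],
    (form_depth_le_num_mem Hm Hn Hz) as [d2 [Hd2 Hzd]].
  exact (form_depth_le_intro Hnat (has_depth_or Hnat Hd1 Hd2 Hyd Hzd Hx) (or_intror eq_refl)).
Qed.

Lemma form_depth_le_num_ex k m n x v y : is_num E k m -> is_num E (S k) n -> var_code E v ->
  form_depth_le E y m -> ex_code E v y x -> form_depth_le E x n.
Proof.
  intros Hm Hn Hv Hy Hx. pose proof (num_is_nat Hn) as Hnat.
  destruct (form_depth_le_num_mem Hm Hn Hy) as [d [Hd Hyd]].
  exact (form_depth_le_intro Hnat (has_depth_ex Hnat Hv Hd Hyd Hx) (or_intror eq_refl)).
Qed.

Lemma subst_term_term v c a t t' : const_code E a c -> term_code E t ->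
  subst_term v c t t' -> term_code E t'.
Proof. intros Hc Ht [[_ ->] | [_ ->]]; [right; eauto | exact Ht]. Qed.

Lemma subst_atom_code v c a x x' : const_code E a c -> atom_code E x -> subst E v c x x' ->
  atom_code E x'.
Proof.
  intros Hc (t & u & Ht & Hu & [Hx | Hx]) Hs;
    [ destruct (subst_eq_inv Hs Hx) as (t' & u' & St & Su & Hx')
    | destruct (subst_mem_inv Hs Hx) as (t' & u' & St & Su & Hx') ];
    exists t', u'; eauto 7 using subst_term_term.
Qed.

Lemma subst_form_depth_le v c a k : const_code E a c ->
  forall n y y', is_num E k n -> form_depth_le E y n -> subst E v c y y' -> form_depth_le E y' n.
Proof.
  intro Hc.
  induction k as [|k IH]; intros n y y' Hn Hy Hs;
    destruct (form_depth_le_elim Hy) as [d [Hd _]];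
    destruct (has_depth_cases Hd) as [Hat | [[z Hx] | [[z1 [z2 Hx]] | [u [z Hx]]]]];
    try exact (form_depth_le_atom (num_is_nat Hn) (subst_atom_code Hc Hat Hs)).
  - contradiction (form_depth_le_num0_sub Hn Hy (sub_neg Hx)).
  - contradiction (form_depth_le_num0_sub Hn Hy (sub_or_l Hx)).
  - destruct (subst_ex_inv Hs Hx) as [[_ ->] | _]; [exact Hy|].
    contradiction (form_depth_le_num0_sub Hn Hy (sub_ex Hx)).
  - destruct (num_exists k) as [m Hm], (subst_neg_inv Hs Hx) as (z' & Hx' & Hs').
    apply (form_depth_le_num_neg Hm Hn
             (IH m z z' Hm (form_depth_le_num_sub Hm Hn Hy (sub_neg Hx)) Hs') Hx').
  - destruct (num_exists k) as [m Hm], (subst_or_inv Hs Hx) as (z1' & z2' & Hx' & Hs1 & Hs2).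
    apply (form_depth_le_num_or Hm Hn
             (IH m z1 z1' Hm (form_depth_le_num_sub Hm Hn Hy (sub_or_l Hx)) Hs1)
             (IH m z2 z2' Hm (form_depth_le_num_sub Hm Hn Hy (sub_or_r Hx)) Hs2) Hx').
  - destruct (subst_ex_inv Hs Hx) as [[_ ->] | [_ (z' & Hx' & Hs')]]; [exact Hy|].
    destruct (num_exists k) as [m Hm].
    apply (form_depth_le_num_ex Hm Hn (has_depth_ex_var Hd Hx)
             (IH m z z' Hm (form_depth_le_num_sub Hm Hn Hy (sub_ex Hx)) Hs') Hx').
Qed.

Definition atom_true (x : M) : Prop :=
  exists a b ca cb, const_code E a ca /\ const_code E b cb /\
    ((eq_code E ca cb x /\ a = b) \/ (mem_code E ca cb x /\ E a b)).

Definition tarski_clause (A : M -> Prop) (x : M) : Prop :=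
  atom_true x
  \/ (exists y, neg_code E y x /\ ~ A y)
  \/ (exists y z, or_code E y z x /\ (A y \/ A z))
  \/ (exists v y, ex_code E v y x /\
        exists a ca y', const_code E a ca /\ subst E v ca y y' /\ A y').

Definition tarski_step (p : M) (A : M -> Prop) (x : M) : Prop :=
  (is_sentence E x /\ form_depth_le E x p) /\ tarski_clause A x.

Lemma tarski_clause_atom A a b ca cb x : const_code E a ca -> const_code E b cb ->
  (eq_code E ca cb x -> (tarski_clause A x <-> a = b)) /\
  (mem_code E ca cb x -> (tarski_clause A x <-> E a b)).
Proof.
  intros Ha Hb. split; intro Hx; (split; [|intro Hab; left; exists a, b, ca, cb; auto]);
    intros [(a' & b' & ca' & cb' & Ha' & Hb' & [[Hx' Hab] | [Hx' Hab]]) | C]; try tag_clash;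
    destruct (tagged2_inj Hx' Hx) as [-> ->];
    rewrite (proj2 (tagged_inj Ha Ha')), (proj2 (tagged_inj Hb Hb')); exact Hab.
Qed.

Lemma tarski_clause_neg A y x : neg_code E y x -> (tarski_clause A x <-> ~ A y).
Proof.
  intro Hx. split; [|intro Hy; right; left; eauto].
  intros [(a & b & ca & cb & C) | [(y' & Hx' & Hy) | C]]; try tag_clash.
  rewrite (proj2 (tagged_inj Hx Hx')). exact Hy.
Qed.

Lemma tarski_clause_or A y z x : or_code E y z x -> (tarski_clause A x <-> A y \/ A z).
Proof.
  intro Hx. split; [|intro Hyz; right; right; left; eauto].
  intros [(a & b & ca & cb & C) | [C | [(y' & z' & Hx' & Hyz) | C]]]; try tag_clash.
  destruct (tagged2_inj Hx' Hx) as [-> ->]. exact Hyz.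
Qed.

Lemma tarski_clause_ex A v y x : ex_code E v y x ->
  (tarski_clause A x <-> exists a ca y', const_code E a ca /\ subst E v ca y y' /\ A y').
Proof.
  intro Hx. split; [|intro Hy; right; right; right; eauto].
  intros [(a & b & ca & cb & C) | [C | [C | (v' & y' & Hx' & Hy)]]]; try tag_clash.
  destruct (tagged2_inj Hx' Hx) as [-> ->]. exact Hy.
Qed.

Definition agree_below (A B : M -> Prop) (x : M) : Prop :=
  (forall y, subformula_code y x -> (A y <-> B y)) /\
  (forall v y a ca y', ex_code E v y x -> const_code E a ca -> subst E v ca y y' ->
     (A y' <-> B y')).

Lemma tarski_clause_ext A B x : agree_below A B x -> (tarski_clause A x <-> tarski_clause B x).
Proof.
  assert (transfer : forall A B, agree_below A B x -> tarski_clause A x -> tarski_clause B x).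
  { intros A' B' [Hsub Hinst]
      [C | [(y & Hx & Hy) | [(y & z & Hx & Hyz) | (v & y & Hx & a & ca & y' & Hca & Hs & Hy')]]].
    - left. exact C.
    - right; left. exists y. rewrite <- (Hsub y (sub_neg Hx)). auto.
    - right; right; left. exists y, z.
      rewrite <- (Hsub y (sub_or_l Hx)), <- (Hsub z (sub_or_r Hx)). auto.
    - right; right; right. exists v, y. split; [exact Hx|].
      exists a, ca, y'. rewrite <- (Hinst v y a ca y' Hx Hca Hs). auto. }
  intros [Hsub Hinst]. split; apply transfer; [split; assumption|].
  split; intros; symmetry; eauto.
Qed.

Section Iteration.
Variables (p : M) (step : (M -> Prop) -> M -> Prop) (A0 : M -> Prop).
Hypothesis step_spec : forall A x, step A x <-> tarski_step p A x.

Lemma step_agree A B x : agree_below A B x -> (step A x <-> step B x).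
Proof.
  intro HAB. rewrite !step_spec. unfold tarski_step. rewrite (tarski_clause_ext HAB). reflexivity.
Qed.

Lemma iter_agree_below k : forall n x, is_num E k n -> form_depth_le E x n ->
  agree_below (Nat.iter k step A0) (Nat.iter (S k) step A0) x.
Proof.
  induction k as [|k IH]; intros n x Hn Hx; split.
  - intros y Hy. contradiction (form_depth_le_num0_sub Hn Hx Hy).
  - intros v y a ca y' Hy. contradiction (form_depth_le_num0_sub Hn Hx (sub_ex Hy)).
  - intros y Hy. destruct (num_exists k) as [m Hm].
    exact (step_agree (IH m y Hm (form_depth_le_num_sub Hm Hn Hx Hy))).
  - intros v y a ca y' Hy Hca Hs. destruct (num_exists k) as [m Hm].
    pose proof (form_depth_le_num_sub Hm Hn Hx (sub_ex Hy)) as Hym.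
    exact (step_agree (IH m y' Hm (subst_form_depth_le Hca Hm Hym Hs))).
Qed.

Lemma iter_depth_truth_class k : is_num E k p -> depth_truth_class E (Nat.iter (S k) step A0) p.
Proof.
  intro Hp. split.
  - intros x Hx. apply step_spec in Hx. exact (proj1 Hx).
  - intros x Hs Hx.
    assert (Hfix : Nat.iter (S k) step A0 x <-> tarski_clause (Nat.iter (S k) step A0) x).
    { rewrite <- (tarski_clause_ext (iter_agree_below Hp Hx)).
      etransitivity; [apply step_spec|]. unfold tarski_step. tauto. }
    split; [|split; [|split]].
    + intros a b ca cb Ha Hb. rewrite Hfix. exact (tarski_clause_atom _ x Ha Hb).
    + intros y Hy. rewrite Hfix. exact (tarski_clause_neg _ Hy).
    + intros y z Hyz. rewrite Hfix. exact (tarski_clause_or _ Hyz).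
    + intros v y Hvy. rewrite Hfix. exact (tarski_clause_ex _ Hvy).
Qed.

End Iteration.

End Model.

(** * Definability of the Tarski step *)

Inductive dfm : Type :=
  | dEq : nat -> nat -> dfm
  | dIn : nat -> nat -> dfm
  | dInC : nat -> nat -> dfm
  | dNot : dfm -> dfm
  | dOr : dfm -> dfm -> dfm
  | dAnd : dfm -> dfm -> dfm
  | dImp : dfm -> dfm -> dfm
  | dIff : dfm -> dfm -> dfm
  | dEx : dfm -> dfm
  | dAll : dfm -> dfm.

Fixpoint dwf (n : nat) (f : dfm) : bool :=
  match f with
  | dEq i j | dIn i j => Nat.ltb i n && Nat.ltb j n
  | dInC i _ => Nat.ltb i n
  | dNot f => dwf n f
  | dOr f g | dAnd f g | dImp f g | dIff f g => dwf n f && dwf n g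
  | dEx f | dAll f => dwf (S n) f
  end.

(* The de Bruijn index [i] under [n] binders becomes the named variable [n - 1 - i]. *)
Fixpoint to_fm2 (n : nat) (f : dfm) : fm2 :=
  match f with
  | dEq i j => gEq (n - S i) (n - S j)
  | dIn i j => gIn (n - S i) (n - S j)
  | dInC i k => gInC (n - S i) k
  | dNot f => gNot (to_fm2 n f)
  | dOr f g => gOr (to_fm2 n f) (to_fm2 n g)
  | dAnd f g => gNot (gOr (gNot (to_fm2 n f)) (gNot (to_fm2 n g)))
  | dImp f g => gOr (gNot (to_fm2 n f)) (to_fm2 n g)
  | dIff f g => gNot (gOr (gNot (gOr (gNot (to_fm2 n f)) (to_fm2 n g)))
                          (gNot (gOr (gNot (to_fm2 n g)) (to_fm2 n f))))
  | dEx f => gEx n (to_fm2 (S n) f)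
  | dAll f => gNot (gEx n (gNot (to_fm2 (S n) f)))
  end.

Section DeBruijn.
Context {M : Type} (E : M -> M -> Prop).

Definition scons (a : M) (env : nat -> M) : nat -> M :=
  fun i => match i with 0 => a | S i => env i end.

Fixpoint dsat (env : nat -> M) (c : nat -> M -> Prop) (f : dfm) : Prop :=
  match f with
  | dEq i j => env i = env j
  | dIn i j => E (env i) (env j)
  | dInC i k => c k (env i)
  | dNot f => ~ dsat env c f
  | dOr f g => dsat env c f \/ dsat env c g
  | dAnd f g => dsat env c f /\ dsat env c g
  | dImp f g => dsat env c f -> dsat env c g
  | dIff f g => dsat env c f <-> dsat env c g
  | dEx f => exists a, dsat (scons a env) c f
  | dAll f => forall a, dsat (scons a env) c f
  end.

Lemma sat2_to_fm2 f : forall n s env c, dwf n f = true ->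
  (forall i, i < n -> env i = s (n - S i)) -> (sat2 E s c (to_fm2 n f) <-> dsat env c f).
Proof.
  induction f as [i j | i j | i k | f IH | f IH g IH' | f IH g IH' | f IH g IH' | f IH g IH'
                 | f IH | f IH]; cbn [to_fm2 dwf sat2 dsat]; intros n s env c Hwf Hs;
    repeat match goal with H : (_ && _)%bool = true |- _ => apply andb_prop in H as [? ?] end.
  1-3: repeat match goal with H : Nat.ltb _ _ = true |- _ => apply Nat.ltb_lt, Hs in H as -> end;
       reflexivity.
  1-5: rewrite ?(IH n s env c), ?(IH' n s env c) by assumption;
       destruct (classic (dsat env c f)); tauto.
  all: assert (Hupd : forall a, sat2 E (upd s n a) c (to_fm2 (S n) f) <-> dsat (scons a env) c f)
         by (intro a; apply IH; [assumption|]; intros [|i] Hi; cbn;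
             [ rewrite Nat.sub_0_r; symmetry; apply upd_same
             | rewrite upd_other by lia; apply Hs; lia ]).
  - split; intros [a Ha]; exists a; apply Hupd; exact Ha.
  - split.
    + intros Hn a. apply Hupd. apply NNPP. intro Ha. apply Hn. exists a. exact Ha.
    + intros Hall [a Ha]. apply Ha, Hupd, Hall.
Qed.

End DeBruijn.

(* [d_foo i j ...] holds of the elements with de Bruijn indices [i j ...] exactly when
   [foo E] does; it is literally [foo E] read as a formula, so [dsat] unfolds to it. *)
Definition d_empty i := dAll (dNot (dIn 0 (S i))).
Definition d_upair i j k := dAll (dIff (dIn 0 (S k)) (dOr (dEq 0 (S i)) (dEq 0 (S j)))).
Definition d_pair i j k :=
  dEx (dEx (dAnd (d_upair (2+i) (2+i) 1) (dAnd (d_upair (2+i) (2+j) 0) (d_upair 1 0 (2+k))))).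
Definition d_succ i j := dAll (dIff (dIn 0 (S j)) (dOr (dIn 0 (S i)) (dEq 0 (S i)))).
Fixpoint d_num k i :=
  match k with
  | 0 => d_empty i
  | S k => dEx (dAnd (d_num k 0) (d_succ 0 (S i)))
  end.
Definition d_transitive i := dAll (dAll (dImp (dIn 0 1) (dImp (dIn 1 (2+i)) (dIn 0 (2+i))))).
Definition d_nat i :=
  dAnd (d_transitive i)
    (dAnd (dAll (dImp (dIn 0 (S i)) (d_transitive 0)))
      (dAnd (dOr (d_empty i) (dEx (d_succ 0 (S i))))
        (dAll (dImp (dIn 0 (S i)) (dOr (d_empty 0) (dEx (d_succ 0 1))))))).
Definition d_tagged k i j := dEx (dAnd (d_num k 0) (d_pair 0 (S i) (S j))).
Definition d_tagged2 k t u x := dEx (dAnd (d_pair (S t) (S u) 0) (d_tagged k 0 (S x))).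
Definition d_var_code i := dEx (dAnd (d_nat 0) (d_tagged 0 0 (S i))).
Definition d_const_code i j := d_tagged 1 i j.
Definition d_term_code i := dOr (d_var_code i) (dEx (d_const_code 0 (S i))).
Definition d_eq_code := d_tagged2 0.
Definition d_mem_code := d_tagged2 1.
Definition d_neg_code := d_tagged 2.
Definition d_or_code := d_tagged2 3.
Definition d_ex_code := d_tagged2 4.
Definition d_atom_code x :=
  dEx (dEx (dAnd (d_term_code 1) (dAnd (d_term_code 0)
    (dOr (d_eq_code 1 0 (2+x)) (d_mem_code 1 0 (2+x)))))).
Definition d_pair_in h x d := dEx (dAnd (dIn 0 (S h)) (d_pair (S x) (S d) 0)).

Definition d_depth_neg x d h :=
  dEx (dEx (dAnd (d_neg_code 1 (2+x)) (dAnd (dIn 0 (2+d)) (d_pair_in (2+h) 1 0)))).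
Definition d_depth_or x d h :=
  dEx (dEx (dEx (dEx (dAnd (d_or_code 3 2 (4+x)) (dAnd (dIn 1 (4+d)) (dAnd (dIn 0 (4+d))
    (dAnd (d_pair_in (4+h) 3 1) (d_pair_in (4+h) 2 0)))))))).
Definition d_depth_ex x d h :=
  dEx (dEx (dEx (dAnd (d_var_code 2) (dAnd (d_ex_code 2 1 (3+x))
    (dAnd (dIn 0 (3+d)) (d_pair_in (3+h) 1 0)))))).
Definition d_depth_clause h w :=
  dEx (dEx (dAnd (d_pair 1 0 (2+w)) (dAnd (d_nat 0)
    (dOr (d_atom_code 1) (dOr (d_depth_neg 1 0 (2+h))
      (dOr (d_depth_or 1 0 (2+h)) (d_depth_ex 1 0 (2+h)))))))).
Definition d_depth_witness h := dAll (dImp (dIn 0 (S h)) (d_depth_clause (S h) 0)).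
Definition d_form_depth_le x p :=
  dAnd (d_nat p) (dEx (dEx (dAnd (d_depth_witness 1) (dAnd (d_pair_in 1 (2+x) 0)
    (dOr (dIn 0 (2+p)) (dEq 0 (2+p))))))).
Definition d_formula x := dEx (d_form_depth_le (S x) 0).

Definition d_free_atom v x :=
  dEx (dEx (dAnd (dOr (d_eq_code 1 0 (2+x)) (d_mem_code 1 0 (2+x)))
    (dOr (dEq 1 (2+v)) (dEq 0 (2+v))))).
Definition d_free_neg h x := dEx (dAnd (d_neg_code 0 (1+x)) (dIn 0 (1+h))).
Definition d_free_or h x :=
  dEx (dEx (dAnd (d_or_code 1 0 (2+x)) (dOr (dIn 1 (2+h)) (dIn 0 (2+h))))).
Definition d_free_ex v h x :=
  dEx (dEx (dAnd (d_ex_code 1 0 (2+x)) (dAnd (dNot (dEq 1 (2+v))) (dIn 0 (2+h))))).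
Definition d_free_witness v h :=
  dAll (dImp (dIn 0 (S h)) (dOr (d_free_atom (S v) 0) (dOr (d_free_neg (S h) 0)
    (dOr (d_free_or (S h) 0) (d_free_ex (S v) (S h) 0))))).
Definition d_free_in v x := dEx (dAnd (d_free_witness (S v) 0) (dIn (S x) 0)).
Definition d_sentence x :=
  dAnd (d_formula x) (dNot (dEx (dAnd (d_var_code 0) (d_free_in 0 (S x))))).

Definition d_subst_term v c t t' :=
  dOr (dAnd (dEq t v) (dEq t' c)) (dAnd (dNot (dEq t v)) (dEq t' t)).
Definition d_subst_atom v c x x' :=
  dEx (dEx (dEx (dEx (dAnd (d_subst_term (4+v) (4+c) 3 1) (dAnd (d_subst_term (4+v) (4+c) 2 0)
    (dOr (dAnd (d_eq_code 3 2 (4+x)) (d_eq_code 1 0 (4+x')))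
         (dAnd (d_mem_code 3 2 (4+x)) (d_mem_code 1 0 (4+x'))))))))).
Definition d_subst_neg h x x' :=
  dEx (dEx (dAnd (d_neg_code 1 (2+x)) (dAnd (d_neg_code 0 (2+x')) (d_pair_in (2+h) 1 0)))).
Definition d_subst_or h x x' :=
  dEx (dEx (dEx (dEx (dAnd (d_or_code 3 2 (4+x)) (dAnd (d_or_code 1 0 (4+x'))
    (dAnd (d_pair_in (4+h) 3 1) (d_pair_in (4+h) 2 0))))))).
Definition d_subst_bound v x x' := dEx (dAnd (d_ex_code (1+v) 0 (1+x)) (dEq (1+x') (1+x))).
Definition d_subst_ex v h x x' :=
  dEx (dEx (dEx (dAnd (d_ex_code 2 1 (3+x)) (dAnd (dNot (dEq 2 (3+v)))
    (dAnd (d_ex_code 2 0 (3+x')) (d_pair_in (3+h) 1 0)))))).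
Definition d_subst_clause v c h w :=
  dEx (dEx (dAnd (d_pair 1 0 (2+w))
    (dOr (d_subst_atom (2+v) (2+c) 1 0) (dOr (d_subst_neg (2+h) 1 0)
      (dOr (d_subst_or (2+h) 1 0) (dOr (d_subst_bound (2+v) 1 0) (d_subst_ex (2+v) (2+h) 1 0))))))).
Definition d_subst_witness v c h := dAll (dImp (dIn 0 (S h)) (d_subst_clause (S v) (S c) (S h) 0)).
Definition d_subst v c x x' :=
  dEx (dAnd (d_subst_witness (1+v) (1+c) 0) (d_pair_in 0 (1+x) (1+x'))).

Definition d_atom_true x :=
  dEx (dEx (dEx (dEx (dAnd (d_const_code 3 1) (dAnd (d_const_code 2 0)
    (dOr (dAnd (d_eq_code 1 0 (4+x)) (dEq 3 2)) (dAnd (d_mem_code 1 0 (4+x)) (dIn 3 2)))))))).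
Definition d_tarski_clause x :=
  dOr (d_atom_true x)
    (dOr (dEx (dAnd (d_neg_code 0 (1+x)) (dNot (dInC 0 0))))
      (dOr (dEx (dEx (dAnd (d_or_code 1 0 (2+x)) (dOr (dInC 1 0) (dInC 0 0)))))
        (dEx (dEx (dAnd (d_ex_code 1 0 (2+x))
          (dEx (dEx (dEx (dAnd (d_const_code 2 1) (dAnd (d_subst 4 1 3 0) (dInC 0 0))))))))))).
Definition d_tarski_step p x :=
  dAnd (dAnd (d_sentence x) (d_form_depth_le x p)) (d_tarski_clause x).

Definition tarski_step_class {M : Type} (E : M -> M -> Prop) (p : M) (A : M -> Prop) : M -> Prop :=
  fun y => sat2 E (upd (fun _ => p) 0 y) (fun _ => A) (to_fm2 2 (d_tarski_step 0 1)).

Lemma tarski_step_class_spec {M : Type} (E : M -> M -> Prop) p A y :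
  tarski_step_class E p A y <-> tarski_step E p A y.
Proof.
  unfold tarski_step_class.
  rewrite (@sat2_to_fm2 M E _ 2 _ (scons p (scons y (fun _ => p))) (fun _ => A)).
  - reflexivity.
  - reflexivity.
  - intros [|[|i]] Hi; [reflexivity | reflexivity | lia].
Qed.

Lemma gb_empty_set {M : Type} (E : M -> M -> Prop) X :
  GB_common E X -> M -> exists e, is_empty E e.
Proof.
  intros (_ & Hcls & _ & _ & _ & _ & Hrep & Hcomp) a.
  (* [e] is the image of [a] under the empty class function [F]. *)
  pose (F := fun y => sat2 E (upd (fun _ => a) 0 y) (fun _ z => E z a) (gNot (gEq 0 0))).
  assert (HF : X F) by (apply Hcomp; intro; apply Hcls).
  destruct (Hrep F HF) with (a := a) as [e He].
  - intros x y y' q q' Hq. contradiction Hq. reflexivity.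
  - exists e. intros z Hz. apply He in Hz as (x & q & _ & Hq & _). apply Hq. reflexivity.
Qed.

Lemma depth_truth_class_exists {M : Type} (E : M -> M -> Prop) X k p :
  GB_common E X -> is_num E k p -> exists T, X T /\ depth_truth_class E T p.
Proof.
  intros HGB Hp. pose proof HGB as (Hext & Hcls & Hpair & Hun & _ & Hfound & _ & Hcomp).
  destruct (gb_empty_set HGB p) as [e He].
  exists (Nat.iter (S k) (tarski_step_class E p) (fun z => E z p)). split.
  - induction (S k) as [|n IH]; [apply Hcls | apply Hcomp; intros _; exact IH].
  - exact (iter_depth_truth_class Hext Hpair Hun Hfound He _ (tarski_step_class_spec E p) Hp).
Qed.

Theorem corollary3p6 (M : Type) (E : M -> M -> Prop) (X : (M -> Prop) -> Prop) :
  (GB_plus E X \/ GB_minus E X) ->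
  forall (phi : fm) (s : nat -> M),
    (exists x, code_cfm E (inst s nil phi) x) /\
    (forall x, code_cfm E (inst s nil phi) x ->
       (sat E s phi <-> T_Most E X x)).
Proof.
  intros Hmodel phi s.
  assert (HGB : GB_common E X) by (destruct Hmodel as [[HGB _] | [HGB _]]; exact HGB).
  pose proof HGB as (Hext & _ & Hpair & Hun & _ & Hfound & _).
  destruct (gb_empty_set HGB (s 0)) as [e He].
  split; [exact (code_cfm_exists Hpair Hun He _)|].
  intros x Hx. split.
  - intro Hsat.
    destruct (code_form_depth_le Hext Hpair Hun He Hx) as [p [Hp Hxp]].
    destruct (depth_truth_class_exists HGB Hp) as [T [HXT HT]].
    split; [exact (code_is_sentence Hext Hpair Hun Hfound He Hx)|].
    exists p. split; [exact (num_is_nat Hext Hp)|]. split; [exact Hxp|].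
    exists T. split; [exact HXT|]. split; [|exact HT].
    exact (proj2 (truth_class_sat Hext Hpair Hun Hfound He HT Hx Hxp) Hsat).
  - intros (_ & p & _ & Hxp & T & _ & HTx & HT).
    exact (proj1 (truth_class_sat Hext Hpair Hun Hfound He HT Hx Hxp) HTx).
Qed.
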